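(* Let $X$ be a Dedekind complete Riesz space and let $x,y,z\in X^{s}$ with $x\le y+z$. Then there exist $y_{1},z_{1}\in X^{s}$ such that $y_{1}\le y$, $z_{1}\le z$ and $x=y_{1}+z_{1}$. If in addition $x\in X$, then $y_{1},z_{1}$ can be taken in $X$.
   Context: For a Dedekind complete Riesz space $X$, its sup-completion $X^{s}$ is the set of classes of nonempty upward directed subsets of $X$ under $A\sim B$ iff $\sup_{a\in A}(x\wedge a)=\sup_{b\in B}(x\wedge b)$ for all $x\in X$, with the induced addition, nonnegative scalar multiplication and order; $X$ is identified with a subset of $X^{s}$ via $x\mapsto[\{x\}]$. It is a lattice-ordered cone in which every nonempty subset has a supremum. *)

From Stdlib Require Import Reals.
Open Scope R_scope.

Record RieszSpace := {
  carrier :> Type;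
  rzero : carrier;
  radd : carrier -> carrier -> carrier;
  ropp : carrier -> carrier;
  rscal : R -> carrier -> carrier;
  rle : carrier -> carrier -> Prop;
  rjoin : carrier -> carrier -> carrier;
  rmeet : carrier -> carrier -> carrier;
  raddA : forall x y z, radd x (radd y z) = radd (radd x y) z;
  raddC : forall x y, radd x y = radd y x;
  radd0 : forall x, radd rzero x = x;
  raddN : forall x, radd (ropp x) x = rzero;
  rscal1 : forall x, rscal 1 x = x;
  rscalA : forall a b x, rscal a (rscal b x) = rscal (a * b) x;
  rscalDl : forall a b x, rscal (a + b) x = radd (rscal a x) (rscal b x);
  rscalDr : forall a x y, rscal a (radd x y) = radd (rscal a x) (rscal a y);
  rle_refl : forall x, rle x x;
  rle_anti : forall x y, rle x y -> rle y x -> x = y;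
  rle_trans : forall x y z, rle x y -> rle y z -> rle x z;
  rle_add : forall x y z, rle x y -> rle (radd x z) (radd y z);
  rle_scal : forall a x y, 0 <= a -> rle x y -> rle (rscal a x) (rscal a y);
  rjoin_l : forall x y, rle x (rjoin x y);
  rjoin_r : forall x y, rle y (rjoin x y);
  rjoin_lub : forall x y z, rle x z -> rle y z -> rle (rjoin x y) z;
  rmeet_l : forall x y, rle (rmeet x y) x;
  rmeet_r : forall x y, rle (rmeet x y) y;
  rmeet_glb : forall x y z, rle z x -> rle z y -> rle z (rmeet x y)
}.

Section Riesz.
Variable X : RieszSpace.

Definition is_sup (S : X -> Prop) (s : X) : Prop :=
  (forall a, S a -> rle X a s) /\ (forall u, (forall a, S a -> rle X a u) -> rle X s u).

Definition dedekind_complete : Prop :=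
  forall S : X -> Prop, (exists a, S a) -> (exists u, forall a, S a -> rle X a u) ->
    exists s, is_sup S s.

(** Nonempty upward directed subsets: representatives of elements of X^s. *)
Definition updir (A : X -> Prop) : Prop :=
  (exists a, A a) /\
  forall a b, A a -> A b -> exists c, A c /\ rle X a c /\ rle X b c.

Definition meetset (x : X) (A : X -> Prop) : X -> Prop :=
  fun v => exists a, A a /\ v = rmeet X x a.

(** Order on X^s (on representatives): sup_a (x/\a) <= sup_b (x/\b) for all x in X.
    (These suprema exist in a Dedekind complete space.) *)
Definition sle (A B : X -> Prop) : Prop :=
  forall x s t, is_sup (meetset x A) s -> is_sup (meetset x B) t -> rle X s t.

(** The equivalence A ~ B defining X^s. *)
Definition sequiv (A B : X -> Prop) : Prop :=
  forall x s t, is_sup (meetset x A) s -> is_sup (meetset x B) t -> s = t.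

(** Induced addition [A] + [B] = [A + B]. *)
Definition sadd (A B : X -> Prop) : X -> Prop :=
  fun v => exists a b, A a /\ B b /\ v = radd X a b.

(** Embedding X -> X^s, x |-> [{x}]. *)
Definition ssingle (x : X) : X -> Prop := fun v => v = x.

End Riesz.

From Stdlib Require Import Reals ClassicalEpsilon.

(* Fix z0 in z and decompose each a in X as a = ya + (a - ya), where
   ya = sup_{b in y} ((a - z0) /\ b).  Then [ya] <= y by infinite
   distributivity, and [a - ya] <= z because
   a /\ (b + c) <= ya + ((a - ya) /\ c) whenever c >= z0, so that
   a <= sup (a /\ (y + z)) <= ya + sup ((a - ya) /\ z).  Both parts are
   increasing in a, so running a through x gives directed sets y1, z1 with
   y1 + z1 ~ x; when x ~ [x0], the decomposition of x0 itself works. *)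

Section RieszSpaceTheory.
Context {X : RieszSpace}.
Local Notation "0" := (rzero X).
Local Notation "a + b" := (radd X a b).
Local Notation "- a" := (ropp X a).
Local Notation "a - b" := (radd X a (ropp X b)).
Local Notation "a <= b" := (rle X a b).
Local Notation "a /\' b" := (rmeet X a b) (at level 40).
Local Notation "a \/' b" := (rjoin X a b) (at level 40).

Lemma addA a b c : a + (b + c) = (a + b) + c. Proof. apply raddA. Qed.
Lemma addC a b : a + b = b + a. Proof. apply raddC. Qed.
Lemma add0r a : 0 + a = a. Proof. apply radd0. Qed.
Lemma addNr a : - a + a = 0. Proof. apply raddN. Qed.
Lemma addrN a : a - a = 0. Proof. rewrite addC; apply addNr. Qed.
Lemma addrNK a b : (a - b) + b = a.
Proof. now rewrite <- addA, addNr, addC, add0r. Qed.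
Lemma addKr a b : - a + (a + b) = b.
Proof. now rewrite addA, addNr, add0r. Qed.
Lemma addrK a b : (a + b) - b = a.
Proof. now rewrite <- addA, addrN, addC, add0r. Qed.
Lemma subKr a b : a + (b - a) = b. Proof. rewrite addC; apply addrNK. Qed.

Lemma le_refl a : a <= a. Proof. apply rle_refl. Qed.
Lemma le_trans a b c : a <= b -> b <= c -> a <= c. Proof. apply rle_trans. Qed.
Lemma le_anti a b : a <= b -> b <= a -> a = b. Proof. apply rle_anti. Qed.

Lemma le_add2r a b c : a + c <= b + c <-> a <= b.
Proof.
  split; [|apply rle_add].
  intro H; apply (rle_add X _ _ (- c)) in H; now rewrite !addrK in H.
Qed.

Lemma le_add2l a b c : c + a <= c + b <-> a <= b.
Proof. rewrite (addC c a), (addC c b); apply le_add2r. Qed.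

Lemma le_add a b c d : a <= b -> c <= d -> a + c <= b + d.
Proof.
  intros Hab Hcd; apply le_trans with (b + c);
    [apply le_add2r | apply le_add2l]; assumption.
Qed.

Lemma le_subl_add a b c : a - c <= b <-> a <= b + c.
Proof. rewrite <- (le_add2r _ _ c), addrNK; reflexivity. Qed.

Lemma le_subr_add a b c : a <= b - c <-> a + c <= b.
Proof. rewrite <- (le_add2r _ _ c), addrNK; reflexivity. Qed.

Lemma le_sub2l r p q : p <= q -> r - q <= r - p.
Proof.
  intros H; apply le_subl_add.
  rewrite <- (addrNK r p) at 1; apply le_add2l, H.
Qed.

Lemma meet_l a b : a /\' b <= a. Proof. apply rmeet_l. Qed.
Lemma meet_r a b : a /\' b <= b. Proof. apply rmeet_r. Qed.
Lemma meet_glb a b c : c <= a -> c <= b -> c <= a /\' b. Proof. apply rmeet_glb. Qed.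

Lemma meet_mono a b c d : a <= b -> c <= d -> a /\' c <= b /\' d.
Proof.
  intros; apply meet_glb;
    [apply le_trans with a | apply le_trans with c]; auto using meet_l, meet_r.
Qed.

Lemma meet_id a : a /\' a = a.
Proof. apply le_anti; [apply meet_l | apply meet_glb; apply le_refl]. Qed.

Lemma addr_meet p q r : p + (q /\' r) = (p + q) /\' (p + r).
Proof.
  apply le_anti.
  - apply meet_glb; apply le_add2l; [apply meet_l | apply meet_r].
  - rewrite <- (le_add2l _ _ (- p)), addKr.
    apply meet_glb; [rewrite <- (addKr p q) at 2 | rewrite <- (addKr p r) at 2];
      apply le_add2l; [apply meet_l | apply meet_r].
Qed.

Lemma meet_add_join p q : (p /\' q) + (p \/' q) = p + q.
Proof.
  apply le_anti.
  - assert (H : p \/' q <= (p + q) - (p /\' q)).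
    { apply rjoin_lub; apply le_subr_add;
        [| rewrite (addC p q)]; apply le_add2l; [apply meet_r | apply meet_l]. }
    apply le_subr_add in H; now rewrite addC.
  - assert (H : (p + q) - (p \/' q) <= p /\' q).
    { apply meet_glb; apply le_subl_add;
        [| rewrite (addC p q)]; apply le_add2l; [apply rjoin_r | apply rjoin_l]. }
    now apply le_subl_add in H.
Qed.

(* Infinite distributivity: u /\ sup F = sup (u /\ F). *)
Lemma meet_sup_le (F : X -> Prop) s u t :
  is_sup X F s -> (forall f, F f -> u /\' f <= t) -> u /\' s <= t.
Proof.
  intros [Hub Hlub] Ht.
  assert (Hs : s <= (t + (u \/' s)) - u).
  { apply Hlub; intros f Hf; apply le_subr_add.
    rewrite (addC f u), <- meet_add_join.
    apply le_add; [now apply Ht |].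
    apply rjoin_lub; [apply rjoin_l | apply le_trans with s; auto; apply rjoin_r]. }
  apply le_subr_add in Hs.
  rewrite (addC s u), <- meet_add_join in Hs.
  now apply le_add2r in Hs.
Qed.

Lemma meet_add_le a b c d :
  (a - c) /\' b <= d -> a /\' (b + c) <= d + ((a - d) /\' c).
Proof.
  intros H; rewrite addr_meet, subKr; apply meet_glb; [apply meet_l |].
  assert (E : a /\' (b + c) = c + ((a - c) /\' b))
    by now rewrite addr_meet, subKr, addC.
  rewrite E, (addC d c); now apply le_add2l.
Qed.

Lemma sup_unique F s t : is_sup X F s -> is_sup X F t -> s = t.
Proof. intros [Hs Hs'] [Ht Ht']; apply le_anti; auto. Qed.

Lemma sup_meetset_single w v : is_sup X (meetset X w (ssingle X v)) (w /\' v).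
Proof.
  split.
  - intros e [b [-> ->]]; apply le_refl.
  - intros u Hu; apply Hu; now exists v.
Qed.

Lemma sle_singleP a B :
  sle X (ssingle X a) B <->
  forall u T, is_sup X (meetset X u B) T -> u /\' a <= T.
Proof.
  split.
  - intros H u T HT; exact (H u _ T (sup_meetset_single u a) HT).
  - intros H u s T Hs HT.
    rewrite (sup_unique _ _ _ Hs (sup_meetset_single u a)); auto.
Qed.

Lemma sle_single_le_sup a B S :
  sle X (ssingle X a) B -> is_sup X (meetset X a B) S -> a <= S.
Proof. rewrite sle_singleP; intros H HS; rewrite <- (meet_id a); auto. Qed.

Lemma sle_single_sup w B s :
  is_sup X (meetset X w B) s -> sle X (ssingle X s) B.
Proof.
  intros Hs; apply sle_singleP; intros u T HT.
  apply (meet_sup_le _ _ _ _ Hs); intros f [b [Hb ->]].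
  apply le_trans with (u /\' b).
  - apply meet_mono; [apply le_refl | apply meet_r].
  - apply (proj1 HT); now exists b.
Qed.

Lemma sle_single_mono a b B :
  a <= b -> sle X (ssingle X b) B -> sle X (ssingle X a) B.
Proof.
  rewrite !sle_singleP; intros Hab H u T HT.
  apply le_trans with (u /\' b); [apply meet_mono; auto using le_refl | eauto].
Qed.

Lemma sle_single_mem a A : A a -> sle X (ssingle X a) A.
Proof. rewrite sle_singleP; intros Ha u T HT; apply (proj1 HT); now exists a. Qed.

Lemma sle_of_single A B :
  (forall a, A a -> sle X (ssingle X a) B) -> sle X A B.
Proof.
  intros H u s T Hs HT; apply (proj2 Hs); intros e [a [Ha ->]].
  exact (proj1 (sle_singleP a B) (H a Ha) u T HT).
Qed.

Lemma sle_of_dominated A B :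
  (forall a, A a -> exists b, B b /\ a <= b) -> sle X A B.
Proof.
  intros H; apply sle_of_single; intros a Ha.
  destruct (H a Ha) as [b [Hb Hab]].
  exact (sle_single_mono _ _ _ Hab (sle_single_mem _ _ Hb)).
Qed.

Lemma sequiv_sle A B : sequiv X A B -> sle X B A.
Proof. intros H u s t Hs Ht; rewrite (H u t s Ht Hs); apply le_refl. Qed.

Lemma sequiv_of_sle A B : sle X A B -> sle X B A -> sequiv X A B.
Proof. intros H H' u s t Hs Ht; apply le_anti; eauto. Qed.

Lemma sequiv_single_sadd p q :
  sequiv X (ssingle X (p + q)) (sadd X (ssingle X p) (ssingle X q)).
Proof.
  apply sequiv_of_sle; apply sle_of_dominated.
  - intros a ->; exists (p + q); split; [now exists p, q | apply le_refl].
  - intros v [p' [q' [-> [-> ->]]]]; exists (p + q); split; [reflexivity | apply le_refl].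
Qed.

Section DedekindComplete.
Hypothesis HX : dedekind_complete X.

Lemma meetset_sup_exists w A : (exists a, A a) -> exists s, is_sup X (meetset X w A) s.
Proof.
  intros [a Ha]; apply HX.
  - exists (w /\' a), a; auto.
  - exists w; intros v [b [_ ->]]; apply meet_l.
Qed.

Lemma sle_trans A B C :
  (exists b, B b) -> sle X A B -> sle X B C -> sle X A C.
Proof.
  intros HB HAB HBC u s t Hs Ht.
  destruct (meetset_sup_exists u B HB) as [m Hm].
  apply le_trans with m; eauto.
Qed.

Lemma sequiv_trans A B C :
  (exists b, B b) -> sequiv X A B -> sequiv X B C -> sequiv X A C.
Proof.
  intros HB HAB HBC u s t Hs Ht.
  destruct (meetset_sup_exists u B HB) as [m Hm]; eauto using eq_trans.
Qed.

(* A junk value unless A is nonempty (and X Dedekind complete). *)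
Definition sup_meet (w : X) (A : X -> Prop) : X :=
  epsilon (inhabits 0) (is_sup X (meetset X w A)).

Lemma sup_meetP w A : (exists a, A a) -> is_sup X (meetset X w A) (sup_meet w A).
Proof. intros HA; unfold sup_meet; apply epsilon_spec, meetset_sup_exists, HA. Qed.

End DedekindComplete.

Definition image (f : X -> X) (A : X -> Prop) : X -> Prop :=
  fun v => exists a, A a /\ v = f a.

Lemma updir_image f A :
  (forall a b, a <= b -> f a <= f b) -> updir X A -> updir X (image f A).
Proof.
  intros Hf [[a Ha] HA]; split; [now exists (f a), a |].
  intros p q [a1 [Ha1 ->]] [a2 [Ha2 ->]].
  destruct (HA a1 a2 Ha1 Ha2) as [c [Hc [H1 H2]]].
  exists (f c); repeat split; auto; now exists c.
Qed.

Section Decomposition.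
Hypothesis HX : dedekind_complete X.
Variables y z : X -> Prop.
Hypothesis Hy : exists b, y b.
Hypothesis Hz : updir X z.
Variable z0 : X.
Hypothesis Hz0 : z z0.

Definition ypart (a : X) : X := sup_meet (a - z0) y.
Definition zpart (a : X) : X := a - ypart a.

Lemma ypartP a : is_sup X (meetset X (a - z0) y) (ypart a).
Proof. exact (sup_meetP HX _ _ Hy). Qed.

Lemma ypart_add_zpart a : ypart a + zpart a = a.
Proof. apply subKr. Qed.

Lemma ypart_mono a a' : a <= a' -> ypart a <= ypart a'.
Proof.
  intros Ha; apply (proj2 (ypartP a)); intros e [b [Hb ->]].
  apply le_trans with ((a' - z0) /\' b).
  - apply meet_mono; [apply le_add2r, Ha | apply le_refl].
  - apply (proj1 (ypartP a')); now exists b.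
Qed.

Lemma ypart_le_shift a a' : a <= a' -> ypart a' <= (a' - a) + ypart a.
Proof.
  intros Ha; apply (proj2 (ypartP a')); intros e [b [Hb ->]].
  apply le_trans with ((a' - a) + ((a - z0) /\' b)).
  - rewrite addr_meet, addA, addrNK; apply meet_mono; [apply le_refl |].
    rewrite <- (add0r b) at 1; apply le_add2r.
    rewrite <- (addrN a); apply le_add2r, Ha.
  - apply le_add2l, (proj1 (ypartP a)); now exists b.
Qed.

Lemma zpart_mono a a' : a <= a' -> zpart a <= zpart a'.
Proof.
  intros Ha; unfold zpart; apply le_subr_add.
  apply le_trans with ((a - ypart a) + ((a' - a) + ypart a)).
  - now apply le_add2l, ypart_le_shift.
  - rewrite (addC (a' - a)), addA, addrNK, subKr; apply le_refl.
Qed.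

Lemma ypart_sle a : sle X (ssingle X (ypart a)) y.
Proof. exact (sle_single_sup _ _ _ (ypartP a)). Qed.

Lemma sup_meet_sadd_le a :
  sup_meet a (sadd X y z) <= ypart a + sup_meet (zpart a) z.
Proof.
  assert (Hzne : exists c, z c) by now exists z0.
  assert (Hyzne : exists v, sadd X y z v)
    by (destruct Hy as [b Hb]; exists (b + z0), b, z0; auto).
  apply (proj2 (sup_meetP HX _ _ Hyzne)).
  intros e [v [[b [c [Hb [Hc ->]]]] ->]].
  (* enlarge c to c' >= z0, which makes (a - c') /\ b <= ypart a *)
  destruct (proj2 Hz c z0 Hc Hz0) as [c' [Hc' [Hcc' Hz0c']]].
  apply le_trans with (a /\' (b + c')).
  { apply meet_mono; [apply le_refl | now apply le_add2l]. }
  apply le_trans with (ypart a + (zpart a /\' c')).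
  - apply meet_add_le, le_trans with ((a - z0) /\' b).
    + apply meet_mono; [now apply le_sub2l | apply le_refl].
    + apply (proj1 (ypartP a)); now exists b.
  - apply le_add2l, (proj1 (sup_meetP HX _ _ Hzne)); now exists c'.
Qed.

Lemma zpart_sle a : sle X (ssingle X a) (sadd X y z) -> sle X (ssingle X (zpart a)) z.
Proof.
  intros Ha.
  assert (Hzne : exists c, z c) by now exists z0.
  assert (Hyzne : exists v, sadd X y z v)
    by (destruct Hy as [b Hb]; exists (b + z0), b, z0; auto).
  apply sle_single_mono with (sup_meet (zpart a) z);
    [| exact (sle_single_sup _ _ _ (sup_meetP HX _ _ Hzne))].
  unfold zpart at 1; apply le_subl_add; rewrite addC.
  apply le_trans with (sup_meet a (sadd X y z)); [| apply sup_meet_sadd_le].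
  exact (sle_single_le_sup _ _ _ Ha (sup_meetP HX _ _ Hyzne)).
Qed.

Lemma image_ypart_sle A : sle X (image ypart A) y.
Proof. apply sle_of_single; intros v [a [Ha ->]]; apply ypart_sle. Qed.

Lemma image_zpart_sle A :
  (exists a, A a) -> sle X A (sadd X y z) -> sle X (image zpart A) z.
Proof.
  intros HA Hle; apply sle_of_single; intros v [a [Ha ->]].
  exact (zpart_sle a (sle_trans HX _ _ _ HA (sle_single_mem a A Ha) Hle)).
Qed.

Lemma sequiv_sadd_image_parts A :
  updir X A -> sequiv X A (sadd X (image ypart A) (image zpart A)).
Proof.
  intros [_ HA]; apply sequiv_of_sle; apply sle_of_dominated.
  - intros a Ha; exists a; split; [| apply le_refl].
    exists (ypart a), (zpart a); repeat split; [now exists a | now exists a |].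
    symmetry; apply ypart_add_zpart.
  - intros v [p [q [[a [Ha ->]] [[a' [Ha' ->]] ->]]]].
    destruct (HA a a' Ha Ha') as [c [Hc [Hac Ha'c]]].
    exists c; split; [exact Hc |].
    rewrite <- (ypart_add_zpart c).
    apply le_add; [apply ypart_mono | apply zpart_mono]; assumption.
Qed.

End Decomposition.
End RieszSpaceTheory.

Theorem mainTheorem11 (X : RieszSpace) (HX : dedekind_complete X)
  (x y z : X -> Prop) (Hx : updir X x) (Hy : updir X y) (Hz : updir X z) :
  sle X x (sadd X y z) ->
  (exists y1 z1 : X -> Prop, updir X y1 /\ updir X z1 /\
      sle X y1 y /\ sle X z1 z /\ sequiv X x (sadd X y1 z1)) /\
  ((exists x0 : X, sequiv X x (ssingle X x0)) ->
   exists y1 z1 : X, sle X (ssingle X y1) y /\ sle X (ssingle X z1) z /\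
      sequiv X x (sadd X (ssingle X y1) (ssingle X z1))).
Proof.
  intros Hle.
  destruct Hy as [Hyne _]; destruct (proj1 Hz) as [z0 Hz0].
  split.
  - exists (image (ypart y z0) x), (image (zpart y z0) x).
    split; [| split; [| split; [| split]]].
    + exact (updir_image _ _ (ypart_mono HX y Hyne z0) Hx).
    + exact (updir_image _ _ (zpart_mono HX y Hyne z0) Hx).
    + exact (image_ypart_sle HX y Hyne z0 x).
    + exact (image_zpart_sle HX y z Hyne Hz z0 Hz0 x (proj1 Hx) Hle).
    + exact (sequiv_sadd_image_parts HX y Hyne z0 x Hx).
  - intros [x0 Hx0].
    assert (Hx0le : sle X (ssingle X x0) (sadd X y z))
      by exact (sle_trans HX _ _ _ (proj1 Hx) (sequiv_sle _ _ Hx0) Hle).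
    exists (ypart y z0 x0), (zpart y z0 x0); split; [| split].
    + exact (ypart_sle HX y Hyne z0 x0).
    + exact (zpart_sle HX y z Hyne Hz z0 Hz0 x0 Hx0le).
    + rewrite <- (ypart_add_zpart y z0 x0) in Hx0.
      apply (sequiv_trans HX _ _ _ (ex_intro _ _ eq_refl) Hx0), sequiv_single_sadd.
Qed.
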